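(* Let $n>d$, $\mathbf X\in\mathbb R^{n\times d}$ with full column rank, $1\le k<d$, and $\mathbf y\in\mathbb R^n$ with $\mathbf y\notin\operatorname{col}(\mathbf X)$. Let $\hat{\boldsymbol\beta}_{\mathrm{OLS}}=(\mathbf X^T\mathbf X)^{-1}\mathbf X^T\mathbf y$ and let $F=\frac{(\|\mathbf y-\mathbf P_{-1:k}\mathbf y\|^2-\|\mathbf y-\mathbf P\mathbf y\|^2)/k}{\|\mathbf y-\mathbf P\mathbf y\|^2/(n-d)}$ be the $F$-test statistic for $H_{1:k}:\boldsymbol\beta_{1:k}=\mathbf 0$. Then $$F=\frac{\|\mathbf V_{1:k}^T\mathbf X_{1:k}\hat{\boldsymbol\beta}_{1:k,\mathrm{OLS}}\|^2/k}{\big(\hat\sigma_{1:k}^2-\|\mathbf V_{1:k}^T\mathbf X_{1:k}\hat{\boldsymbol\beta}_{1:k,\mathrm{OLS}}\|^2\big)/(n-d)}.$$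
   Context: $\mathbf A_i$, $\mathbf A_{1:i}$, $\mathbf A_{-1:i}$ denote the $i$-th column, first $i$ columns, and submatrix with first $i$ columns removed (similarly for vectors). $\mathbf P$ is the orthogonal projection onto the column space of $\mathbf X$, and $\mathbf P_{-1:i}$ onto that of $\mathbf X_{-1:i}$. $\mathbf V\in\mathbb R^{n\times(n-d+k)}$ has orthonormal columns spanning the orthogonal complement of the column space of $\mathbf X_{-1:k}$, with first $k$ columns $\mathbf V_i=(\mathbf I-\mathbf P_{-1:i})\mathbf X_i/\|(\mathbf I-\mathbf P_{-1:i})\mathbf X_i\|$. $\hat\sigma_{1:k}=\|(\mathbf I-\mathbf P_{-1:k})\mathbf y\|$. *)

From HB Require Import structures.
From mathcomp Require Import all_boot all_order all_algebra.
From mathcomp Require Import reals.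
Set Implicit Arguments. Unset Strict Implicit. Unset Printing Implicit Defensive.
Import Order.TTheory GRing.Theory Num.Theory.
Local Open Scope ring_scope.

Section Defs.
Variable R : realType.

Definition nrm2 n (v : 'cV[R]_n) : R := \sum_(i < n) v i 0 ^+ 2.
Definition nrm n (v : 'cV[R]_n) : R := Num.sqrt (nrm2 v).

Definition is_orth_proj n m (A : 'M[R]_(n, m)) (P : 'M[R]_n) : Prop :=
  P^T = P /\ P *m P = P /\ (P^T == A^T)%MS.

Lemma dropc_proof d i (j : 'I_(d - i)) : (i + j < d)%N.
Proof. by rewrite -ltn_subRL. Qed.

(* X_{-1:i}: X with its first i columns removed (paper indexing is 1-based;
   here columns are 0-based, so this keeps columns i, ..., d-1). *)
Definition dropc n d (i : nat) (X : 'M[R]_(n, d)) : 'M[R]_(n, d - i) :=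
  \matrix_(r < n, j < d - i) X r (Ordinal (dropc_proof j)).

Definition takec n d k (hk : (k <= d)%N) (X : 'M[R]_(n, d)) : 'M[R]_(n, k) :=
  \matrix_(r < n, j < k) X r (widen_ord hk j).

Definition taker d k (hk : (k <= d)%N) (b : 'cV[R]_d) : 'cV[R]_k :=
  \matrix_(j < k, c < 1) b (widen_ord hk j) c.

(* V_{1:k}: column i (0-based, = paper's column i+1) is
   (I - P_{-1:i+1}) X_{i+1} / || (I - P_{-1:i+1}) X_{i+1} ||,
   where Pm j is the orthogonal projection onto col(X_{-1:j}). *)
Definition Vmat n d k (hk : (k <= d)%N) (X : 'M[R]_(n, d))
    (Pm : nat -> 'M[R]_n) : 'M[R]_(n, k) :=
  \matrix_(r < n, i < k)
    (let w := (1%:M - Pm i.+1) *m col (widen_ord hk i) X in w r 0 / nrm w).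

End Defs.

From mathcomp Require Import all_boot all_order all_algebra.
From mathcomp Require Import reals.
From mathcomp Require Import zify.
Set Implicit Arguments. Unset Strict Implicit. Unset Printing Implicit Defensive.
Import Order.TTheory GRing.Theory Num.Theory.
Local Open Scope ring_scope.

(* Write P_i for the projection onto col X_{-1:i}, so P_0 = P.  Removing one column at a
   time, P_i - P_{i+1} is the rank-one projection onto the unit vector V_{i+1}, hence
   ||y - P_k y||^2 - ||y - P y||^2 = y^T (P_0 - P_k) y = sum_i (V_i^T y)^2.
   Each V_i lies in col X and is orthogonal to the columns of X_{-1:k}, so by the normal
   equations V_i^T y = V_i^T X beta = V_i^T X_{1:k} beta_{1:k}.  Thus the numerator of F
   is ||V_{1:k}^T X_{1:k} beta_{1:k}||^2 and its denominator is sigma^2 minus it. *)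

Section Norms.
Variables (R : realType) (n : nat).
Implicit Types v : 'cV[R]_n.

Lemma nrm2E v : nrm2 v = (v^T *m v) 0 0.
Proof. by rewrite /nrm2 mxE; apply: eq_bigr => i _; rewrite !mxE expr2. Qed.

Lemma nrm2_ge0 v : 0 <= nrm2 v.
Proof. by apply: sumr_ge0 => i _; apply: sqr_ge0. Qed.

Lemma nrm2_eq0 v : (nrm2 v == 0) = (v == 0).
Proof.
rewrite psumr_eq0 => [|i _]; last exact: sqr_ge0.
apply/allP/eqP => [v0 | -> i _]; last by rewrite mxE expr2 mul0r eqxx.
apply/colP => i; have := v0 i (mem_index_enum _).
by rewrite mxE sqrf_eq0 => /eqP.
Qed.

Lemma sqr_nrm v : nrm v ^+ 2 = nrm2 v.
Proof. exact/sqr_sqrtr/nrm2_ge0. Qed.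

End Norms.

Lemma unitmx_gram (R : realType) n d (X : 'M[R]_(n, d)) :
  \rank X = d -> X^T *m X \in unitmx.
Proof.
move=> rankX; rewrite -row_free_unit -kermx_eq0; apply/rowV0P => u /sub_kermxP uXX0.
have uXt0 : u *m X^T = 0.
  apply/trmx_inj/eqP; rewrite trmx0 -nrm2_eq0 nrm2E trmxK.
  by rewrite trmx_mul trmxK mulmxA -(mulmxA u) uXX0 mul0mx mxE.
have freeXt : row_free X^T by rewrite /row_free mxrank_tr rankX.
by apply: (row_free_inj freeXt); rewrite uXt0 mul0mx.
Qed.

Section OrthProj.
Variables (R : realType) (n m : nat) (A : 'M[R]_(n, m)) (P : 'M[R]_n).
Hypothesis projP : is_orth_proj A P.

Lemma orth_proj_eqmx p (B : 'M[R]_(n, p)) : (A^T == B^T)%MS -> is_orth_proj B P.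
Proof.
case: projP => symP [idemP /eqmxP eqPA] /eqmxP eqAB.
by do 2!split=> //; apply/eqmxP/(eqmx_trans eqPA eqAB).
Qed.

Lemma orth_proj_id p (B : 'M[R]_(n, p)) : (B^T <= A^T)%MS -> P *m B = B.
Proof.
case: projP => _ [idemP /eqmxP <-] /submxP [D defB].
by rewrite -[B]trmxK defB trmx_mul trmxK mulmxA idemP.
Qed.

Lemma orth_proj_range p (B : 'M[R]_(n, p)) : ((P *m B)^T <= A^T)%MS.
Proof. by case: projP => _ [_ /eqmxP <-]; rewrite trmx_mul submxMl. Qed.

Lemma orth_proj_compl_orth p q (B : 'M[R]_(n, p)) (C : 'M[R]_(n, q)) :
  (B^T <= A^T)%MS -> ((1%:M - P) *m C)^T *m B = 0.
Proof.
case: projP => symP _ /orth_proj_id PB.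
by rewrite trmx_mul linearB /= trmx1 symP -mulmxA mulmxBl mul1mx PB subrr mulmx0.
Qed.

Lemma nrm2_orth_proj_compl (y : 'cV[R]_n) :
  nrm2 ((1%:M - P) *m y) = (y^T *m (1%:M - P) *m y) 0 0.
Proof.
case: projP => symP [idemP _].
have idemQ : (1%:M - P) *m (1%:M - P) = 1%:M - P.
  by rewrite mulmxBl mul1mx mulmxBr mulmx1 idemP subrr subr0.
by rewrite nrm2E trmx_mul linearB /= trmx1 symP !mulmxA -(mulmxA _ _ (1%:M - P)) idemQ.
Qed.

End OrthProj.

Lemma sym_rank1_fixE (R : realType) n (Q : 'M[R]_n) (v : 'cV[R]_n) (r : 'rV[R]_n) :
  Q^T = Q -> Q = v *m r -> Q *m v = v -> Q = (nrm2 v)^-1 *: (v *m v^T).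
Proof.
move=> symQ defQ Qv.
have [v0 | v_neq0] := eqVneq v 0; first by rewrite defQ v0 !mul0mx scaler0.
have nrm_neq0 : nrm2 v != 0 by rewrite nrm2_eq0.
have defQt : Q = r^T *m v^T by rewrite -symQ defQ trmx_mul.
have rv : v = nrm2 v *: r^T.
  by rewrite -{1}Qv defQt -mulmxA nrm2E -mul_mx_scalar -mx11_scalar.
have rT : r^T = (nrm2 v)^-1 *: v by rewrite {2}rv scalerA mulVf // scale1r.
by rewrite defQt rT -scalemxAl.
Qed.

Lemma orth_proj_diff_rank1 (R : realType) n m1 m2 (A1 : 'M[R]_(n, m1))
    (A2 : 'M[R]_(n, m2)) (P1 P2 : 'M[R]_n) (x : 'cV[R]_n) :
  is_orth_proj A1 P1 -> is_orth_proj A2 P2 ->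
  (A2^T <= A1^T)%MS -> (x^T <= A1^T)%MS -> (A1^T <= col_mx x^T A2^T)%MS ->
  let v := (1%:M - P2) *m x in
  P1 - P2 = (nrm2 v)^-1 *: (v *m v^T).
Proof.
move=> proj1 proj2 sA21 sxA1 sA1x v.
have [sym1 [idem1 /eqmxP eq1]] := proj1; have [sym2 [idem2 /eqmxP eq2]] := proj2.
have P2A1 : (P2^T <= A1^T)%MS by rewrite eq2.
have P2P1 : P2 *m P1 = P2.
  by rewrite -{1}sym2 -sym1 -trmx_mul (orth_proj_id proj1 P2A1) sym2.
have QP2 : (P1 - P2) *m P2 = 0.
  by rewrite mulmxBl (orth_proj_id proj1 P2A1) idem2 subrr.
have Qx : (P1 - P2) *m x = v.
  by rewrite mulmxBl (orth_proj_id proj1 sxA1) /v mulmxBl mul1mx.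
have : (P1^T <= col_mx x^T P2^T)%MS.
  by rewrite eq1 (submx_trans sA1x) // -!addsmxE addsmxS // eq2.
case/submxP=> D defP1t.
have defP1 : P1 = row_mx x P2 *m D^T.
  by rewrite -[P1]trmxK defP1t trmx_mul tr_col_mx !trmxK.
apply: (sym_rank1_fixE (r := usubmx D^T)).
- by rewrite linearB /= sym1 sym2.
- (* The columns of P1 lie in span(x, col P2), which P1 - P2 maps into span(v). *)
  have -> : P1 - P2 = (P1 - P2) *m P1 by rewrite mulmxBl idem1 P2P1.
  rewrite {2}defP1 -[D^T]vsubmxK mulmxA mul_mx_row Qx QP2.
  by rewrite mul_row_col mul0mx addr0 vsubmxK.
- by rewrite /v mulmxA mulmxBr mulmx1 QP2 subr0 Qx.
Qed.

Section DropColumns.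
Variables (R : realType) (n d : nat) (X : 'M[R]_(n, d)).

Lemma row_tr_dropc i (j : 'I_(d - i)) :
  row j (dropc i X)^T = (col (Ordinal (dropc_proof j)) X)^T.
Proof. by apply/rowP => c; rewrite !mxE. Qed.

Lemma col_sub_dropc i (j : 'I_d) : (i <= j)%N -> ((col j X)^T <= (dropc i X)^T)%MS.
Proof.
move=> le_ij; have lt_ji : (j - i < d - i)%N by have := ltn_ord j; lia.
have -> : col j X = col (Ordinal (dropc_proof (Ordinal lt_ji))) X.
  by congr col; apply: val_inj => /=; lia.
by rewrite -row_tr_dropc row_sub.
Qed.

Lemma dropc_sub i : ((dropc i X)^T <= X^T)%MS.
Proof. by apply/row_subP => j; rewrite row_tr_dropc tr_col row_sub. Qed.

Lemma dropcS_sub i : ((dropc i.+1 X)^T <= (dropc i X)^T)%MS.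
Proof. by apply/row_subP => j; rewrite row_tr_dropc col_sub_dropc //=; lia. Qed.

Lemma dropc_sub_col_mx (i : 'I_d) :
  ((dropc i X)^T <= col_mx (col i X)^T (dropc i.+1 X)^T)%MS.
Proof.
apply/row_subP => j; rewrite row_tr_dropc -addsmxE.
have [j0 | j_gt0] := posnP j.
  have -> : Ordinal (dropc_proof j) = i by apply: val_inj => /=; lia.
  exact: addsmxSl.
by apply: submx_trans (addsmxSr _ _); rewrite col_sub_dropc //=; lia.
Qed.

Lemma dropc0_eqmx : (X^T == (dropc 0 X)^T)%MS.
Proof.
by rewrite /eqmx dropc_sub andbT; apply/row_subP => j; rewrite -tr_col col_sub_dropc.
Qed.

End DropColumns.

Lemma ols_normal_eq (R : realType) n d (X : 'M[R]_(n, d)) (y : 'cV[R]_n) (u : 'rV[R]_n) :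
  \rank X = d -> (u <= X^T)%MS -> u *m X *m (invmx (X^T *m X) *m X^T *m y) = u *m y.
Proof.
move=> rankX /submxP [D ->].
rewrite -!mulmxA; congr (D *m _).
by rewrite !mulmxA mulmxV ?unitmx_gram // mul1mx.
Qed.

Lemma mulmx_takec_taker (R : realType) n d k (hk : (k <= d)%N) (X : 'M[R]_(n, d))
    (u : 'rV[R]_n) (b : 'cV[R]_d) :
  (forall j : 'I_d, (k <= j)%N -> u *m col j X = 0) ->
  u *m (takec hk X *m taker hk b) = u *m X *m b.
Proof.
move=> uX0; apply/rowP => c; rewrite (ord1 c) mulmxA !mxE.
rewrite [RHS](bigID (fun j : 'I_d => (j < k)%N)) /= [X in _ = _ + X]big1 ?addr0.
  rewrite (big_ord_narrow hk); apply: eq_bigr => j _; rewrite !mxE.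
  by congr (_ * _); apply: eq_bigr => r _; rewrite !mxE.
move=> j; rewrite -leqNgt => /uX0; rewrite colE mulmxA -colE => /colP /(_ 0).
by rewrite !mxE => ->; rewrite mul0r.
Qed.

Lemma qform_rank1 (R : realType) n (c : R) (v y : 'cV[R]_n) :
  (y^T *m (c *: (v *m v^T)) *m y) 0 0 = c * (v^T *m y) 0 0 ^+ 2.
Proof.
have yv : (y^T *m v) 0 0 = (v^T *m y) 0 0 by rewrite -[y^T *m v]trmxK trmx_mul trmxK mxE.
rewrite -scalemxAr -scalemxAl mxE mulmxA -(mulmxA (y^T *m v)) mxE big_ord1 yv.
by rewrite expr2.
Qed.

Definition resid_col (R : realType) n d k (hk : (k <= d)%N) (X : 'M[R]_(n, d))
    (Pm : nat -> 'M[R]_n) (i : 'I_k) : 'cV[R]_n :=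
  (1%:M - Pm i.+1) *m col (widen_ord hk i) X.

Lemma Vmat_tr_mulmx (R : realType) n d k (hk : (k <= d)%N) (X : 'M[R]_(n, d))
    (Pm : nat -> 'M[R]_n) (z : 'cV[R]_n) (i : 'I_k) :
  let w := resid_col hk X Pm i in
  ((Vmat hk X Pm)^T *m z) i 0 = (w^T *m z) 0 0 / nrm w.
Proof.
move=> w; rewrite [LHS]mxE [(w^T *m z) 0 0]mxE mulr_suml; apply: eq_bigr => r _.
by rewrite [w^T 0 r]mxE [_^T i r]mxE [Vmat _ _ _ r i]mxE /= mulrAC.
Qed.

Section ExtraSumOfSquares.
Variables (R : realType) (n d k : nat) (X : 'M[R]_(n, d)) (y : 'cV[R]_n).
Variables (P : 'M[R]_n) (Pm : nat -> 'M[R]_n).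
Hypotheses (rankX : \rank X = d) (k_gt0 : (0 < k)%N) (hk : (k <= d)%N).
Hypothesis projP : is_orth_proj X P.
Hypothesis projPm : forall i, (1 <= i <= k)%N -> is_orth_proj (dropc i X) (Pm i).

(* [Pm 0] is unconstrained, so the chain of projections starts with [P] instead. *)
Let Pseq i := if i is 0 then P else Pm i.

Let w := resid_col hk X Pm.

Lemma Pseq_orth_proj i : (i <= k)%N -> is_orth_proj (dropc i X) (Pseq i).
Proof.
rewrite /Pseq; case: i => [_ | i le_ik]; last exact: projPm.
exact: (orth_proj_eqmx projP (dropc0_eqmx X)).
Qed.

Lemma Pseq_diff (i : 'I_k) : Pseq i - Pseq i.+1 = (nrm2 (w i))^-1 *: (w i *m (w i)^T).
Proof.
exact: (orth_proj_diff_rank1 (Pseq_orth_proj (ltnW (ltn_ord i)))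
  (Pseq_orth_proj (ltn_ord i)) (dropcS_sub X i) (col_sub_dropc X (leqnn (widen_ord hk i)))
  (dropc_sub_col_mx X (widen_ord hk i))).
Qed.

Lemma extra_ss_sum :
  nrm2 ((1%:M - Pm k) *m y) - nrm2 ((1%:M - P) *m y)
  = \sum_(i < k) ((w i)^T *m y) 0 0 ^+ 2 / nrm2 (w i).
Proof.
have PseqK : Pseq k = Pm k by case: (k) k_gt0.
have entryB (A B : 'M[R]_1) : A 0 0 - B 0 0 = (A - B) 0 0 by rewrite !mxE.
have compl_diff : (1%:M - Pseq k) - (1%:M - Pseq 0) = Pseq 0 - Pseq k.
  by rewrite opprB addrC addrA subrK.
have telescope : Pseq 0 - Pseq k = \sum_(i < k) (Pseq i - Pseq i.+1).
  rewrite -opprB -(@telescope_sumr _ 0 k Pseq (leq0n k)) big_mkord -sumrN.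
  by apply: eq_bigr => i _; rewrite opprB.
rewrite -PseqK (nrm2_orth_proj_compl (Pseq_orth_proj (leqnn k))).
rewrite (nrm2_orth_proj_compl (Pseq_orth_proj (leq0n k))) entryB -mulmxBl -mulmxBr.
rewrite compl_diff telescope mulmx_sumr mulmx_suml summxE; apply: eq_bigr => i _.
by rewrite Pseq_diff qform_rank1 mulrC.
Qed.

Let beta := invmx (X^T *m X) *m X^T *m y.

Lemma resid_col_fitE (i : 'I_k) :
  (w i)^T *m (takec hk X *m taker hk beta) = (w i)^T *m y.
Proof.
have projS : is_orth_proj (dropc i.+1 X) (Pm i.+1) := Pseq_orth_proj (ltn_ord i).
rewrite mulmx_takec_taker => [|j le_kj]; last first.
  exact: (orth_proj_compl_orth projS _ (col_sub_dropc X (leq_trans (ltn_ord i) le_kj))).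
apply: ols_normal_eq => //; rewrite /w /resid_col mulmxBl mul1mx linearB /= addmx_sub //.
- by rewrite tr_col row_sub.
- by rewrite eqmx_opp (submx_trans (orth_proj_range projS _) (dropc_sub X _)).
Qed.

Lemma nrm2_Vmat_fit_sum :
  nrm2 ((Vmat hk X Pm)^T *m (takec hk X *m taker hk beta))
  = \sum_(i < k) ((w i)^T *m y) 0 0 ^+ 2 / nrm2 (w i).
Proof.
by apply: eq_bigr => i _; rewrite Vmat_tr_mulmx resid_col_fitE expr_div_n sqr_nrm.
Qed.

Lemma extra_ssE :
  nrm2 ((1%:M - Pm k) *m y) - nrm2 ((1%:M - P) *m y)
  = nrm2 ((Vmat hk X Pm)^T *m (takec hk X *m taker hk beta)).
Proof. by rewrite extra_ss_sum nrm2_Vmat_fit_sum. Qed.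

End ExtraSumOfSquares.

Theorem lemmaC4 (R : realType) (n d k : nat) (X : 'M[R]_(n, d)) (y : 'cV[R]_n)
    (P : 'M[R]_n) (Pm : nat -> 'M[R]_n)
    (hdn : (d < n)%N) (hrank : \rank X = d)
    (hk1 : (1 <= k)%N) (hkd : (k < d)%N)
    (hy : ~~ (y^T <= X^T)%MS)
    (hP : is_orth_proj X P)
    (hPm : forall i : nat, (1 <= i <= k)%N -> is_orth_proj (dropc i X) (Pm i)) :
  let betaOLS := invmx (X^T *m X) *m X^T *m y in
  let F := ((nrm2 (y - Pm k *m y) - nrm2 (y - P *m y)) / k%:R)
           / (nrm2 (y - P *m y) / (n - d)%:R) in
  let V := Vmat (ltnW hkd) X Pm in
  let a := nrm2 (V^T *m (takec (ltnW hkd) X *m taker (ltnW hkd) betaOLS)) in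
  let sigma := nrm ((1%:M - Pm k) *m y) in
  F = (a / k%:R) / ((sigma ^+ 2 - a) / (n - d)%:R).
Proof.
(* [hdn] and [hy] only make the denominators nonzero; the identity holds without them. *)
move=> betaOLS F V a sigma.
have complE (Q : 'M[R]_n) : y - Q *m y = (1%:M - Q) *m y by rewrite mulmxBl mul1mx.
have extra := extra_ssE y hrank hk1 (ltnW hkd) hP hPm.
by rewrite /F /a /sigma sqr_nrm !complE -extra subKr.
Qed.
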